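(* Let $P$ be a finite set of points in $\mathbb{R}^m$, let $(A,B)$ be an optimal 2-means partition of $P$, let $S\subseteq A$ be the set of low-revenue points of $A$, assume $S\ne\emptyset$, and let $x\in\arg\max_{u\in S}d(u,\rho(A))$. Then for every $u\in S$, $d(u,\rho(B))\le\frac{11}{9}d(x,\rho(A))$.
   Context: Distances are Euclidean: $d(x,y)=\|x-y\|_2$. For finite nonempty $S$, $\rho(S)=\frac{1}{|S|}\sum_{u\in S}u$ and $\Delta_1(S)=\sum_{u\in S}d(u,\rho(S))^2$. A partition $(A,B)$ of $P$ into two nonempty sets is an optimal 2-means partition if it minimizes $\Delta_1(A)+\Delta_1(B)$ among all partitions of $P$ into two nonempty sets. For $i\in A$, $j\in B$, $rev(i,j)=\min\{d(i,j)/\max\{d(i,\rho(A)),d(j,\rho(B))\},\,1\}$ (equal to $1$ if the maximum is $0$). For $u\in A$, $HR_B(u)=\{v\in B: rev(u,v)\ge\frac{1}{10}\}$. A point $u\in A$ is a high-revenue point if $|HR_B(u)|\ge\frac12|B|$, and a low-revenue point otherwise. *)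

From HB Require Import structures.
From mathcomp Require Import all_boot all_order all_algebra.
From mathcomp Require Import reals.
Set Implicit Arguments. Unset Strict Implicit. Unset Printing Implicit Defensive.
Import Order.TTheory GRing.Theory Num.Theory.
Local Open Scope ring_scope.

Section KMeans.
Variables (R : realType) (m n : nat).

Definition dist (x y : 'rV[R]_m) : R := Num.sqrt (\sum_(k < m) (x 0 k - y 0 k) ^+ 2).

(* The point set P = {p i | i < n}, p injective; subsets of P are sets of indices. *)
Variable p : 'I_n -> 'rV[R]_m.

Definition rho (S : {set 'I_n}) : 'rV[R]_m := (#|S|%:R)^-1 *: \sum_(i in S) p i.

Definition Delta1 (S : {set 'I_n}) : R := \sum_(i in S) dist (p i) (rho S) ^+ 2.

Definition optimal_2means (A : {set 'I_n}) : Prop :=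
  A != set0 /\ ~: A != set0 /\
  forall A' : {set 'I_n}, A' != set0 -> ~: A' != set0 ->
    Delta1 A + Delta1 (~: A) <= Delta1 A' + Delta1 (~: A').

Definition rev (A B : {set 'I_n}) (i j : 'I_n) : R :=
  let M := Num.max (dist (p i) (rho A)) (dist (p j) (rho B)) in
  if M == 0 then 1 else Num.min (dist (p i) (p j) / M) 1.

Definition HR (A B : {set 'I_n}) (u : 'I_n) : {set 'I_n} :=
  [set v in B | 10%:R^-1 <= rev A B u v].

Definition high_revenue (A B : {set 'I_n}) (u : 'I_n) : bool :=
  (#|B|%:R / 2%:R <= #|HR A B u|%:R :> R).

Definition low_revenue (A B : {set 'I_n}) (u : 'I_n) : bool := ~~ high_revenue A B u.

End KMeans.

(* Write B = ~: A, cA = rho(A), cB = rho(B).  The argument has three ingredients.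
   1. Metric facts about the Euclidean distance (triangle inequality, via the
      Cauchy-Schwarz inequality obtained from Lagrange's identity).
   2. The centroid minimises the sum of squared distances; hence, in an optimal
      2-means partition, moving one point v of B over to A cannot decrease the
      cost, which forces d(v, cB) <= d(v, cA) (a Voronoi property of B).
   3. A low-revenue u in A has fewer than |B|/2 high-revenue partners, so some
      v in B has rev(u, v) < 1/10, i.e. 10 d(u, v) < max(d(u, cA), d(v, cB)).
   A purely metric lemma then combines 2 and 3 into d(u, cB) <= 11/9 d(u, cA),
   and the theorem follows since d(u, cA) <= d(x, cA) by the choice of x. *)
From Pilot Require Import Defs.
From HB Require Import structures.
From mathcomp Require Import all_boot all_order all_algebra.
From mathcomp Require Import reals ring lra.
Import Order.TTheory GRing.Theory Num.Theory.
Local Open Scope ring_scope.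
Set Implicit Arguments. Unset Strict Implicit.

Section EuclideanSums.
Variables (R : realType) (m : nat).
Implicit Types a b : 'I_m -> R.

Let sqr_sum_ge0 a : 0 <= \sum_i a i ^+ 2.
Proof. by apply: sumr_ge0 => i _; exact: sqr_ge0. Qed.

(* Lagrange's identity: the Cauchy-Schwarz defect is a sum of squares. *)
Lemma lagrange_identity a b :
  \sum_i \sum_j (a i * b j - a j * b i) ^+ 2 =
  2%:R * ((\sum_i a i ^+ 2) * (\sum_i b i ^+ 2) - (\sum_i a i * b i) ^+ 2).
Proof.
have expand i j : (a i * b j - a j * b i) ^+ 2 =
   (a i ^+ 2 * b j ^+ 2 + a j ^+ 2 * b i ^+ 2) - 2%:R * ((a i * b i) * (a j * b j)).
  by ring.
under eq_bigr do under eq_bigr do rewrite expand.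
under eq_bigr do rewrite sumrB big_split /=.
rewrite sumrB big_split /= expr2 mulr_suml mulr_suml.
under [X in _ = _ * (_ - X)]eq_bigr do rewrite mulr_sumr.
under [X in _ = _ * (X - _)]eq_bigr do rewrite mulr_sumr.
have -> : \sum_i \sum_j a j ^+ 2 * b i ^+ 2 = \sum_i \sum_j a i ^+ 2 * b j ^+ 2.
  by rewrite exchange_big.
under [X in _ - X = _]eq_bigr do rewrite -mulr_sumr.
rewrite -mulr_sumr; ring.
Qed.

Lemma cauchy_schwarz a b :
  \sum_i a i * b i <= Num.sqrt (\sum_i a i ^+ 2) * Num.sqrt (\sum_i b i ^+ 2).
Proof.
have defect_ge0 : 0 <= \sum_i \sum_j (a i * b j - a j * b i) ^+ 2.
  by apply: sumr_ge0 => i _; apply: sumr_ge0 => j _; exact: sqr_ge0.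
rewrite lagrange_identity in defect_ge0.
rewrite -sqrtrM ?sqr_sum_ge0 //; apply: (le_trans (ler_norm _)).
rewrite -sqrtr_sqr ler_sqrt; last by apply: mulr_ge0; exact: sqr_sum_ge0.
lra.
Qed.

Lemma minkowski a b :
  Num.sqrt (\sum_i (a i + b i) ^+ 2) <=
  Num.sqrt (\sum_i a i ^+ 2) + Num.sqrt (\sum_i b i ^+ 2).
Proof.
rewrite -(@ler_sqr _ (Num.sqrt _)) ?nnegrE ?addr_ge0 ?sqrtr_ge0 //.
rewrite sqr_sqrtr ?sqr_sum_ge0 //.
have expand i : (a i + b i) ^+ 2 = a i ^+ 2 + b i ^+ 2 + 2%:R * (a i * b i).
  by ring.
under eq_bigr do rewrite expand.
rewrite !big_split /= -mulr_sumr.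
have := cauchy_schwarz a b.
have := sqr_sqrtr (sqr_sum_ge0 a); have := sqr_sqrtr (sqr_sum_ge0 b).
move: (Num.sqrt _) (Num.sqrt _) (\sum_i a i * b i) => y x z <- <-.
nra.
Qed.
End EuclideanSums.

Section Distance.
Variables (R : realType) (m : nat).
Implicit Types x y z : 'rV[R]_m.

Lemma dist_ge0 x y : 0 <= dist x y.
Proof. exact: sqrtr_ge0. Qed.

Lemma distxx x : dist x x = 0.
Proof. by rewrite /dist big1 ?sqrtr0 // => k _; rewrite subrr expr0n. Qed.

Lemma distC x y : dist x y = dist y x.
Proof. by rewrite /dist; under eq_bigr do rewrite -sqrrN opprB. Qed.

Lemma dist_triangle x y z : dist x z <= dist x y + dist y z.
Proof.
have := minkowski (fun k => x 0 k - y 0 k) (fun k => y 0 k - z 0 k).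
by under eq_bigr do rewrite subrKA.
Qed.

Lemma sqr_dist x y : dist x y ^+ 2 = \sum_(k < m) (x 0 k - y 0 k) ^+ 2.
Proof. by rewrite sqr_sqrtr //; apply: sumr_ge0 => k _; exact: sqr_ge0. Qed.

Lemma close_partner_bound (u v cA cB : 'rV[R]_m) :
  dist v cB <= dist v cA ->
  10%:R * dist u v < Num.max (dist u cA) (dist v cB) ->
  dist u cB <= 11%:R / 9%:R * dist u cA.
Proof.
move=> voronoi; rewrite lt_max => close.
have via_v := dist_triangle u v cB.
have v_to_cA := dist_triangle v u cA.
rewrite (distC v u) in v_to_cA.
have := dist_ge0 u v; have := dist_ge0 u cA.
by case/orP: close; lra.
Qed.
End Distance.

Section TwoMeans.
Variables (R : realType) (m n : nat) (p : 'I_n -> 'rV[R]_m).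

Lemma sum_coord_rho (S : {set 'I_n}) k :
  \sum_(i in S) p i 0 k = #|S|%:R * rho p S 0 k.
Proof.
rewrite /rho mxE summxE.
have [/cards0_eq -> | S_ne0] := eqVneq #|S| 0%N.
  by rewrite cards0 mul0r big_pred0 // => i; rewrite inE.
by rewrite mulrA mulfV ?mul1r // pnatr_eq0.
Qed.

Lemma centroid_min (S : {set 'I_n}) (c : 'rV[R]_m) :
  Delta1 p S <= \sum_(i in S) dist (p i) c ^+ 2.
Proof.
rewrite /Delta1; under eq_bigr do rewrite sqr_dist.
under [X in _ <= X]eq_bigr do rewrite sqr_dist.
rewrite exchange_big [X in _ <= X]exchange_big /=.
apply: ler_sum => k _.
set r := rho p S 0 k; set c' := c 0 k; set N : R := #|S|%:R.
have shift i : (p i 0 k - c') ^+ 2 =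
    (p i 0 k - r) ^+ 2 + (2%:R * (r - c') * p i 0 k - (r ^+ 2 - c' ^+ 2)).
  by ring.
under [X in _ <= X]eq_bigr do rewrite shift.
rewrite big_split /= sumrB -mulr_sumr sum_coord_rho -/r -/N.
rewrite sumr_const -[_ *+ #|S|]mulr_natr -/N lerDl.
have -> : 2%:R * (r - c') * (N * r) - (r ^+ 2 - c' ^+ 2) * N = N * (r - c') ^+ 2.
  by ring.
by apply: mulr_ge0; [rewrite /N ler0n | exact: sqr_ge0].
Qed.

Lemma Delta1_remove (S : {set 'I_n}) v : v \in S ->
  dist (p v) (rho p S) ^+ 2 + Delta1 p (S :\ v) <= Delta1 p S.
Proof.
move=> vS; rewrite [Delta1 p S]/Delta1 (bigD1 v) //= lerD2l.
apply: (le_trans (centroid_min _ (rho p S))).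
by rewrite (eq_bigl (fun i => (i \in S) && (i != v))) // => i; rewrite !inE andbC.
Qed.

Lemma Delta1_add (S : {set 'I_n}) v : v \notin S ->
  Delta1 p (v |: S) <= Delta1 p S + dist (p v) (rho p S) ^+ 2.
Proof.
move=> vS; apply: (le_trans (centroid_min _ (rho p S))).
by rewrite big_setU1 //= addrC.
Qed.

(* Voronoi property: in an optimal partition (A, B), every point of B is at
   least as close to rho(B) as to rho(A), since moving it to A is not cheaper. *)
Lemma optimal_voronoi (A : {set 'I_n}) v : optimal_2means p A -> v \notin A ->
  dist (p v) (rho p (~: A)) <= dist (p v) (rho p A).
Proof.
move=> [_ [_ opt]] vA.
have vB : v \in ~: A by rewrite inE.
have [B_v0 | B_v_ne0] := eqVneq (~: A :\ v) set0.
  have -> : ~: A = [set v].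
    apply/eqP; rewrite eqEsubset sub1set vB andbT.
    by rewrite -setD_eq0 B_v0.
  by rewrite /rho cards1 big_set1 invr1 scale1r distxx dist_ge0.
have vA_ne0 : v |: A != set0 by apply/set0Pn; exists v; rewrite !inE eqxx.
have := opt (v |: A) vA_ne0.
rewrite setCU setIC -setDE => /(_ B_v_ne0) cost.
have grow := Delta1_add vA; have shrink := Delta1_remove vB.
rewrite -(@ler_sqr _ (dist _ _)) ?nnegrE ?dist_ge0 //.
lra.
Qed.

Lemma small_rev_close (A B : {set 'I_n}) (u v : 'I_n) :
  Defs.rev p A B u v < 10%:R^-1 ->
  10%:R * dist (p u) (p v) < Num.max (dist (p u) (rho p A)) (dist (p v) (rho p B)).
Proof.
rewrite /Defs.rev; set M := Num.max _ _.
have M_ge0 : 0 <= M by rewrite le_max dist_ge0.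
have [_ | M_ne0] := eqVneq M 0; first by lra.
have M_gt0 : 0 < M by rewrite lt_neqAle eq_sym M_ne0.
by rewrite gt_min ltr_pdivrMr // => /orP[]; lra.
Qed.

Lemma low_revenue_partner (A B : {set 'I_n}) u :
  low_revenue p A B u -> exists2 v, v \in B & Defs.rev p A B u v < 10%:R^-1.
Proof.
move=> low; have : ~~ (B \subset HR p A B u).
  apply: contra low => /subset_leq_card; rewrite -(ler_nat R) => B_le_HR.
  rewrite /high_revenue; have : (0 : R) <= #|B|%:R by rewrite ler0n.
  lra.
case/subsetPn => v vB; rewrite inE vB /= -ltNge => small.
by exists v.
Qed.
End TwoMeans.
Unset Implicit Arguments.

Theorem mainTheorem7 (R : realType) (m n : nat) (p : 'I_n -> 'rV[R]_m)
  (p_inj : injective p) (A : {set 'I_n})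
  (hopt : optimal_2means p A)
  (S : {set 'I_n})
  (hS : S = [set u in A | low_revenue p A (~: A) u])
  (hSne : S != set0)
  (x : 'I_n) (hxS : x \in S)
  (hxmax : forall u, u \in S -> dist (p u) (rho p A) <= dist (p x) (rho p A)) :
  forall u, u \in S ->
    dist (p u) (rho p (~: A)) <= 11%:R / 9%:R * dist (p x) (rho p A).
Proof.
move=> u uS; have u_le_x := hxmax u uS.
move: uS; rewrite hS inE => /andP [_ /low_revenue_partner [v vB small]].
have voronoi : dist (p v) (rho p (~: A)) <= dist (p v) (rho p A).
  by apply: optimal_voronoi => //; rewrite inE in vB.
apply: (le_trans (close_partner_bound voronoi (small_rev_close small))).
by rewrite ler_wpM2l // divr_ge0 // ler0n.
Qed.
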